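(* Let $g(x)=\sum_{n\ge0}g_nx^n$ be the unique formal power series with $g(0)=1$ satisfying $$g(x)=\frac{1}{1-\frac{x}{1-x}-x^2 g(x)},$$ equivalently $g(x)=\frac{1-2x-\sqrt{1-4x+8x^3-4x^4}}{2x^2(1-x)}$ (so $g_n$ begins $1,1,3,7,19,51,143,407,\dots$). Let $h_n=\det\left(g_{i+j}\right)_{0\le i,j\le n}$ be its Hankel transform. Then for all $n\ge0$, $$h_n=2^{\lfloor (n+1)^2/4\rfloor}.$$ In particular $h_n=4\,h_{n-2}^2/h_{n-4}$ for all $n\ge4$.
   Context: The Hankel transform of a sequence $(g_n)_{n\ge0}$ is the sequence $h_n=\det(g_{i+j})_{0\le i,j\le n}$, $n\ge 0$. *)

From mathcomp Require Import all_boot all_order all_algebra.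
Set Implicit Arguments. Unset Strict Implicit. Unset Printing Implicit Defensive.
Import GRing.Theory Num.Theory.
Local Open Scope ring_scope.

(* The identity g = 1/D with
   D(x) = 1 - x/(1-x) - x^2 g(x) (D has constant term 1, hence is invertible)
   is equivalent to g * D = 1; the n-th coefficient of g * D is given below,
   using x/(1-x) = sum_{k>=1} x^k. *)
Definition gD_coef (g : nat -> rat) (n : nat) : rat :=
  g n - \sum_(1 <= k < n.+1) g (n - k)%N
      - \sum_(0 <= k < n.-1) g k * g (n - 2 - k)%N.

Definition is_g (g : nat -> rat) : Prop :=
  g 0%N = 1 /\ forall n : nat, gD_coef g n = (n == 0%N)%:R.

Definition hankel (g : nat -> rat) (n : nat) : rat :=
  \det (\matrix_(i < n.+1, j < n.+1) g (i + j)%N).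

(* With T = (1/(1-x) + g)/2 the functional equation of g unfolds into the
   2-periodic J-fraction  g = 1/(1 - x - 2x^2 T),  T = 1/(1 - x - x^2 g).
   So g_n is the weighted number of Motzkin paths of length n with level steps
   of weight 1 and down steps of weights lam_k = 2, 1, 2, 1, ... (by height),
   and the Motzkin triangle L of these paths factors the Hankel matrix as
   L D L^T with L unitriangular and D = diag(lam_1 ... lam_k)_k.  Hence
   h_n = prod_(k <= n) 2^(ceil(k/2)) = 2^(floor((n+1)^2/4)). *)

From mathcomp Require Import all_boot all_order all_algebra.
From mathcomp Require Import ring zify.
Import GRing.Theory Num.Theory.
Local Open Scope ring_scope.

Set Implicit Arguments.
Unset Strict Implicit.
Unset Printing Implicit Defensive.

Section MotzkinTriangle.
Variables (R : comNzRingType) (b lam : nat -> R).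

(* Motzkin paths of n steps from height 0 to height k, a level step at height
   k weighing b k and a down step from height k weighing lam k. *)
Fixpoint motzkin n k : R :=
  if n is n'.+1 then
    (if k is k'.+1 then motzkin n' k' else 0)
      + b k * motzkin n' k + lam k.+1 * motzkin n' k.+1
  else (k == 0)%:R.

Lemma motzkin_eq0 n k : (n < k)%N -> motzkin n k = 0.
Proof.
elim: n k => [|n IHn] [|k] //= ltnk.
by rewrite !IHn ?mulr0 ?addr0 //; lia.
Qed.

Lemma motzkin_diag n : motzkin n n = 1.
Proof.
elim: n => //= n ->.
by rewrite !motzkin_eq0 ?mulr0 ?addr0.
Qed.

Definition lam_prod k : R := \prod_(1 <= j < k.+1) lam j.

Lemma lam_prodS k : lam_prod k.+1 = lam_prod k * lam k.+1.
Proof. by rewrite /lam_prod big_nat_recr. Qed.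

Definition motzkin_form K i j : R :=
  \sum_(k < K) motzkin i k * motzkin j k * lam_prod k.

Lemma motzkin_form_sym K i j : motzkin_form K i j = motzkin_form K j i.
Proof.
by apply: eq_bigr => k _; rewrite (mulrC (motzkin i k)).
Qed.

Lemma motzkin_form_widen K K' i j :
  (i < K)%N -> (K <= K')%N -> motzkin_form K' i j = motzkin_form K i j.
Proof.
move=> ltiK leKK'; rewrite /motzkin_form.
rewrite [RHS](big_ord_widen K'
  (fun k => motzkin i k * motzkin j k * lam_prod k)) // [RHS]big_mkcond.
apply: eq_bigr => k _; case: ltnP => // leKk.
by rewrite motzkin_eq0 ?mul0r // (leq_trans ltiK).
Qed.

Lemma motzkin_formS K i j : (j < K)%N ->
  motzkin_form K i.+1 j =
  \sum_(k < K) (b k * motzkin i k * motzkin j k * lam_prod k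
     + (motzkin i k * motzkin j k.+1 + motzkin i k.+1 * motzkin j k)
         * lam_prod k.+1).
Proof.
case: K => // K ltjK.
have up_steps : \sum_(k < K.+1)
    (if nat_of_ord k is k'.+1 then motzkin i k' else 0) * motzkin j k * lam_prod k
  = \sum_(k < K.+1) motzkin i k * motzkin j k.+1 * lam_prod k.+1.
  rewrite big_ord_recl big_ord_recr /= (motzkin_eq0 ltjK) !(mul0r, mulr0).
  by rewrite add0r addr0; apply: eq_bigr => k _; rewrite /bump /= add1n.
transitivity (\sum_(k < K.+1)
    (if nat_of_ord k is k'.+1 then motzkin i k' else 0) * motzkin j k * lam_prod k
  + \sum_(k < K.+1) b k * motzkin i k * motzkin j k * lam_prod k
  + \sum_(k < K.+1) motzkin i k.+1 * motzkin j k * lam_prod k.+1).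
  rewrite /motzkin_form -!big_split; apply: eq_bigr => k _ /=.
  (* [ring] cannot reify the match itself, only a name for it. *)
  set prev := match _ with 0%N => _ | _.+1 => _ end.
  by rewrite lam_prodS; ring.
by rewrite up_steps -!big_split; apply: eq_bigr => k _ /=; ring.
Qed.

(* The right-hand side of motzkin_formS is symmetric in i and j. *)
Lemma motzkin_form_shift K i j : (i < K)%N -> (j < K)%N ->
  motzkin_form K i.+1 j = motzkin_form K i j.+1.
Proof.
move=> ltiK ltjK.
rewrite motzkin_formS // [in RHS]motzkin_form_sym motzkin_formS //.
by apply: eq_bigr => k _; ring.
Qed.

Lemma motzkin_form_moment K i j :
  (i + j < K)%N -> motzkin_form K i j = motzkin (i + j) 0.
Proof.
elim: i j => [|i IHi] j ltijK.
  case: K ltijK => // K _; rewrite /motzkin_form big_ord_recl big1 => [|k _].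
    by rewrite /lam_prod big_geq //= mul1r mulr1 addr0.
  by rewrite !mul0r.
by rewrite motzkin_form_shift ?IHi ?addSnnS //; lia.
Qed.

Lemma det_hankel_motzkin n :
  \det (\matrix_(i < n.+1, j < n.+1) motzkin (i + j) 0) =
  \prod_(k < n.+1) lam_prod k.
Proof.
pose L := \matrix_(i < n.+1, k < n.+1) motzkin i k.
pose LD := \matrix_(i < n.+1, k < n.+1) (motzkin i k * lam_prod k).
have -> : \matrix_(i < n.+1, j < n.+1) motzkin (i + j) 0 = LD *m L^T.
  apply/matrixP => i j; rewrite !mxE.
  rewrite -(@motzkin_form_moment (n.+1 + (i + j))); last by lia.
  rewrite (@motzkin_form_widen n.+1) ?leq_addr //.
  by apply: eq_bigr => k _; rewrite !mxE mulrAC.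
rewrite det_mulmx det_tr !det_trig; last 2 first.
- by apply/is_trig_mxP => i k ltik; rewrite mxE motzkin_eq0.
- by apply/is_trig_mxP => i k ltik; rewrite mxE motzkin_eq0 ?mul0r.
rewrite [X in _ * X]big1 ?mulr1 => [|k _]; last by rewrite mxE motzkin_diag.
by apply: eq_bigr => k _; rewrite mxE motzkin_diag mul1r.
Qed.

End MotzkinTriangle.

Lemma dvdXnP (F : fieldType) N (p : {poly F}) :
  reflect (forall i, (i < N)%N -> p`_i = 0) ('X^N %| p).
Proof.
apply: (iffP (dvdpP _ _)) => [[q ->] i ltiN | p_low0].
  by rewrite coefMXn ltiN.
exists (drop_poly N p); rewrite -[LHS](poly_take_drop N).
suff -> : take_poly N p = 0 by rewrite add0r.
by apply/polyP => i; rewrite coef_take_poly coef0; case: ifP => // /p_low0.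
Qed.

Section MotzkinColumns.
Variables (F : fieldType) (b lam : nat -> F) (N : nat) (C : nat -> {poly F}).
Hypothesis C_rec : forall k, 'X^N %| C k - ((k == 0)%:R%:P + 'X *
  ((if k is k'.+1 then C k' else 0) + (b k)%:P * C k + (lam k.+1)%:P * C k.+1)).

Lemma coef_motzkin_columns n k : (n < N)%N -> (C k)`_n = motzkin b lam n k.
Proof.
elim: n k => [|n IHn] k ltnN.
all: move/dvdXnP/(_ _ ltnN)/eqP: (C_rec k); rewrite coefB subr_eq0 => /eqP ->.
  by rewrite coefD coefC coefXM addr0.
rewrite coefD coefC add0r coefXM /= !coefD !coefCM !IHn 1?ltnW //.
by case: k => [|k]; rewrite ?coef0 ?IHn 1?ltnW.
Qed.

End MotzkinColumns.

Section TwoPeriodicJFraction.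
Variables (F : fieldType) (b alpha beta : F) (N : nat) (G0 G1 : {poly F}).
Hypothesis G0_eq :
  'X^N %| G0 - (1 + b%:P * 'X * G0 + alpha%:P * 'X^2 * G0 * G1).
Hypothesis G1_eq :
  'X^N %| G1 - (1 + b%:P * 'X * G1 + beta%:P * 'X^2 * G0 * G1).

Definition alt_lam k : F := if odd k then alpha else beta.

(* x^k G0^(k/2 + 1) G1^(ceil(k/2)), the k-th column of the Motzkin triangle. *)
Definition column k : {poly F} :=
  ('X^2 * G0 * G1) ^+ k./2 * (if odd k then 'X * G0 * G1 else G0).

Lemma column_double m : column m.*2 = ('X^2 * G0 * G1) ^+ m * G0.
Proof. by rewrite /column odd_double doubleK. Qed.

Lemma column_doubleS m :
  column m.*2.+1 = ('X^2 * G0 * G1) ^+ m * ('X * G0 * G1).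
Proof. by rewrite /column /= odd_double uphalf_double. Qed.

Lemma column_rec k : 'X^N %| column k - ((k == 0)%:R%:P + 'X *
  ((if k is k'.+1 then column k' else 0) + b%:P * column k
     + (alt_lam k.+1)%:P * column k.+1)).
Proof.
move: G0_eq G1_eq; set e0 := G0 - _; set e1 := G1 - _ => dvd_e0 dvd_e1.
set Q := 'X^2 * G0 * G1.
rewrite -[k]odd_double_half /alt_lam; case: (odd k); move: k./2 => m /=.
  rewrite add1n /= odd_double -doubleS column_doubleS !column_double.
  rewrite (_ : _ - _ = Q ^+ m * ('X * G0) * e1); first exact: dvdp_mull.
  by rewrite [Q ^+ m.+1]exprS /Q /e1; ring.
rewrite add0n odd_double; case: m => [|m] /=.
  rewrite (_ : _ - _ = e0) //.
  by rewrite (column_double 0) (column_doubleS 0) /Q /e0; ring.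
rewrite column_double !column_doubleS.
rewrite (_ : _ - _ = Q ^+ m * Q * e0); first exact: dvdp_mull.
by rewrite [Q ^+ m.+1]exprS /Q /e0; ring.
Qed.

Lemma lam_prod_alt k : lam_prod alt_lam k = alpha ^+ uphalf k * beta ^+ k./2.
Proof.
elim: k => [|k IHk]; first by rewrite /lam_prod big_geq ?mulr1.
rewrite lam_prodS IHk /alt_lam /= uphalf_half; case: (odd k) => /=.
  by rewrite add1n !exprS; ring.
by rewrite add0n exprS; ring.
Qed.

End TwoPeriodicJFraction.

Section GSeries.
Variables (g : nat -> rat) (N : nat).
Hypothesis g_eq : is_g g.

Let G : {poly rat} := \poly_(i < N) g i.
Let O : {poly rat} := \poly_(i < N) 1.

Lemma geometric_trunc_eq : 'X^N %| O - (1 + 'X * O).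
Proof.
apply/dvdXnP => -[|i] ltiN; rewrite coefB coefD coef1 coefXM /O !coef_poly ltiN.
  by rewrite subrr.
by rewrite ltnW // add0r subrr.
Qed.

Lemma coef_g_trunc i : (i < N)%N ->
  (G - 'X * O * G - 'X^2 * G ^+ 2)`_i = gD_coef g i.
Proof.
move=> ltiN; rewrite /gD_coef !coefB -mulrA coefXM coefXnM /G coef_poly ltiN.
congr (_ - _ - _).
  case: i ltiN => [|i] ltiN /=; first by rewrite big_geq.
  rewrite coefM big_add1 big_mkord; apply: eq_bigr => j _.
  have ltji := ltn_ord j.
  by rewrite /O !coef_poly subSS !ifT ?mul1r //; lia.
case: ltnP => [lti2|le2i]; first by rewrite big_geq //; lia.
rewrite coefM big_mkord (_ : (i - 2).+1 = i.-1)%N; last by lia.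
apply: eq_bigr => j _; have ltji := ltn_ord j.
by rewrite !coef_poly !ifT //; lia.
Qed.

Lemma g_trunc_eq : 'X^N %| G - (1 + 'X * O * G + 'X^2 * G ^+ 2).
Proof.
rewrite (_ : _ - _ = G - 'X * O * G - 'X^2 * G ^+ 2 - 1); last by ring.
apply/dvdXnP => i ltiN.
by rewrite coefB coef_g_trunc // (proj2 g_eq) coef1 subrr.
Qed.

Let T : {poly rat} := 2^-1 *: (O + G).

Lemma twice_T : 2%:P * T = O + G.
Proof. by rewrite mul_polyC scalerA mulfV ?scale1r. Qed.

Lemma g_trunc_jfrac : 'X^N %| G - (1 + 1%:P * 'X * G + 2%:P * 'X^2 * G * T).
Proof.
rewrite (_ : _ - _ = (G - (1 + 'X * O * G + 'X^2 * G ^+ 2))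
                   + 'X * G * (O - (1 + 'X * O))).
  by rewrite dvdp_add ?dvdp_mull ?g_trunc_eq ?geometric_trunc_eq.
have -> : 2%:P * 'X^2 * G * T = 'X^2 * G * (O + G) by rewrite -twice_T; ring.
ring.
Qed.

Lemma T_trunc_jfrac : 'X^N %| T - (1 + 1%:P * 'X * T + 1%:P * 'X^2 * G * T).
Proof.
rewrite -(dvdpZr _ _ (_ : 2 != 0)) // -mul_polyC.
rewrite (_ : 2%:P * _ = (G - (1 + 'X * O * G + 'X^2 * G ^+ 2))
                   + (1 + 'X * G) * (O - (1 + 'X * O))).
  by rewrite dvdp_add ?dvdp_mull ?g_trunc_eq ?geometric_trunc_eq.
have -> : 2%:P * (T - (1 + 1%:P * 'X * T + 1%:P * 'X^2 * G * T))
  = (2%:P * T) * (1 - 'X - 'X^2 * G) - 2%:P by ring.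
rewrite twice_T; ring.
Qed.

End GSeries.

Lemma g_motzkin (g : nat -> rat) : is_g g ->
  forall n, g n = motzkin (fun=> 1) (alt_lam 2 1) n 0.
Proof.
move=> g_eq n.
have col_rec := column_rec (@g_trunc_jfrac g n.+1 g_eq) (@T_trunc_jfrac g n.+1 g_eq).
rewrite -(coef_motzkin_columns col_rec 0 (ltnSn n)).
by rewrite /column expr0 mul1r coef_poly ltnSn.
Qed.

Lemma sum_uphalf n : (\sum_(k < n.+1) uphalf k = n.+1 ^ 2 %/ 4)%N.
Proof.
elim: n => [|n IHn]; first by rewrite big_ord1.
by rewrite big_ord_recr /= IHn !expnS expn0 !muln1; nia.
Qed.

Lemma hankel_g (g : nat -> rat) : is_g g ->
  forall n, hankel g n = 2 ^+ (n.+1 ^ 2 %/ 4).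
Proof.
move=> g_eq n; rewrite /hankel.
under eq_mx do rewrite g_motzkin //.
rewrite det_hankel_motzkin -sum_uphalf -prodrXr.
by apply: eq_bigr => k _; rewrite lam_prod_alt expr1n mulr1.
Qed.

Lemma sq_div4_rec m :
  ((m.+4 ^ 2 %/ 4) + (m ^ 2 %/ 4) = 2 + (m.+2 ^ 2 %/ 4) * 2)%N.
Proof. rewrite !expnS expn0 !muln1; lia. Qed.

Theorem mainTheorem2 (g : nat -> rat) (Hg : is_g g) :
  (forall n : nat, hankel g n = 2 ^+ ((n.+1 ^ 2) %/ 4)%N) /\
  (forall n : nat, (4 <= n)%N ->
     hankel g n = 4 * (hankel g (n - 2)%N) ^+ 2 / hankel g (n - 4)%N).
Proof.
split=> [|n le4n]; first exact: hankel_g.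
have [m ->] : exists m, n = m.+4 by exists (n - 4)%N; lia.
rewrite !hankel_g // !subSS !subn0.
apply: (canRL (mulfK _)); first by rewrite expf_neq0.
by rewrite -exprD sq_div4_rec exprD exprM.
Qed.
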